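(* Let $G$ be a group, $F$ a field of characteristic $0$, and let $R=M_n(F)$ carry the elementary $G$-grading induced by an $n$-tuple $(g_1,\dots,g_n)$ of pairwise distinct elements of $G$. For $h\in\mathrm{supp}(R)$ put $M_h=\sum_{g_k^{-1}g_l=h}e_{kl}$. Let $h_1,\dots,h_k\in\mathrm{supp}(R)$ with $h_1h_2\cdots h_k=1_G$. Then the matrices $M_{h_1}M_{h_2}\cdots M_{h_k}$ and $M_{h_2}\cdots M_{h_k}$ have the same number of nonzero rows.
   Context: The elementary $G$-grading on $M_n(F)$ induced by $(g_1,\dots,g_n)\in G^n$ is $R=\bigoplus_{g\in G}R_g$ with $R_g=\mathrm{span}\{e_{pq}: g_p^{-1}g_q=g\}$, where $e_{pq}$ are the matrix units. The support is $\mathrm{supp}(R)=\{g\in G: R_g\neq 0\}$. *)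

From HB Require Import structures.
From mathcomp Require Import all_boot all_order all_algebra.
Set Implicit Arguments. Unset Strict Implicit. Unset Printing Implicit Defensive.
Import GRing.Theory.

Definition Mh (G : groupType) (F : fieldType) (n : nat) (g : 'I_n -> G) (h : G)
  : 'M[F]_n :=
  \matrix_(k, l) ((((g k)^-1 * g l)%g == h)%:R)%R.

Definition in_supp (G : groupType) (n : nat) (g : 'I_n -> G) (h : G) : bool :=
  [exists k : 'I_n, exists l : 'I_n, ((g k)^-1 * g l)%g == h].

Definition gprod (G : groupType) (s : seq G) : G := foldr (fun x y => (x * y)%g) 1%g s.

Definition Mprod (G : groupType) (F : fieldType) (n : nat) (g : 'I_n -> G)
  (s : seq G) : 'M[F]_n :=
  foldr (fun h A => (Mh F g h *m A)%R) (1%:M)%R s.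

Definition nz_rows (F : fieldType) (m n : nat) (A : 'M[F]_(m, n)) : nat :=
  #|[set i : 'I_m | row i A != 0%R]|.

From HB Require Import structures.
From mathcomp Require Import all_boot all_order all_algebra.

Set Implicit Arguments. Unset Strict Implicit. Unset Printing Implicit Defensive.
Import GRing.Theory.
Local Open Scope ring_scope.

(* Since g is injective, M_h is the 0/1 matrix of the partial map i |-> j with
   g j = g i * h.  Hence row i of M_{h_1} ... M_{h_k} is nonzero exactly when
   the walk g i, g i h_1, g i h_1 h_2, ... never leaves the range of g.  Right
   translation by h_1 matches the nonzero rows of M_{h_1} M_{h_2} ... M_{h_k}
   bijectively with the nonzero rows l of M_{h_2} ... M_{h_k} for which
   g l h_1^-1 is in the range of g; when h_1 ... h_k = 1 the latter condition
   is automatic, being the endpoint of the walk from g l along h_2, ..., h_k. *)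

Section ElementaryGrading.
Variables (G : groupType) (F : fieldType) (n : nat) (g : 'I_n -> G).
Hypothesis g_inj : injective g.

Definition in_range (x : G) : bool := [exists l, g l == x].

Fixpoint walk_in_range (s : seq G) (x : G) : bool :=
  if s is h :: s' then in_range (x * h)%g && walk_in_range s' (x * h)%g
  else true.

Lemma in_range_g i : in_range (g i).
Proof. by apply/existsP; exists i. Qed.

Lemma MhE h i j : Mh F g h i j = (g j == (g i * h)%g)%:R.
Proof. by rewrite mxE (can2_eq (mulVKg (g i)) (mulKg (g i))). Qed.

Lemma MprodE s i j :
  Mprod F g s i j = (walk_in_range s (g i) && (g j == (g i * gprod s)%g))%:R.
Proof.
elim: s i j => [|h s IHs] i j /=.
  by rewrite mxE mulg1 eq_sym (inj_eq g_inj).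
rewrite -/(Mprod F g s) mxE.
have [l /eqP gl | gN] := pickP (fun l => g l == (g i * h)%g).
  rewrite (bigD1 l) //= big1 ?addr0 => [|l' l'l].
    by rewrite MhE IHs gl eqxx mul1r mulgA -gl in_range_g.
  by rewrite MhE -gl (inj_eq g_inj) (negbTE l'l) mul0r.
have -> : in_range (g i * h)%g = false by apply/existsP => -[l]; rewrite gN.
by rewrite big1 // => l _; rewrite MhE gN mul0r.
Qed.

Lemma walk_in_range_end s x :
  walk_in_range s x -> in_range x -> in_range (x * gprod s)%g.
Proof.
elim: s x => [|h s IHs] x /=; first by rewrite mulg1.
by case/andP=> xh_in walk_s _; rewrite mulgA; apply: IHs walk_s xh_in.
Qed.

Lemma row_Mprod_neq0 s i : (row i (Mprod F g s) != 0) = walk_in_range s (g i).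
Proof.
have [walk_s | walk_sN] := boolP (walk_in_range s (g i)).
  have /existsP[j /eqP gj] := walk_in_range_end walk_s (in_range_g i).
  apply/eqP => /rowP /(_ j).
  by rewrite !mxE MprodE walk_s gj eqxx => /eqP; rewrite oner_eq0.
by apply/negPn/eqP/rowP => j; rewrite !mxE MprodE (negbTE walk_sN).
Qed.

Definition translate (h : G) (i : 'I_n) : 'I_n :=
  odflt i [pick l | g l == (g i * h)%g].

Lemma translateE h i : in_range (g i * h)%g -> g (translate h i) = (g i * h)%g.
Proof.
case/existsP=> l gl; rewrite /translate.
by case: pickP => [l' /eqP //|/(_ l)]; rewrite gl.
Qed.

Lemma nz_rows_Mprod_cons h s :
  nz_rows (Mprod F g (h :: s)) =
  #|[set l | walk_in_range s (g l) && in_range (g l * h^-1)%g]|.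
Proof.
rewrite /nz_rows; set A := [set i | row i _ != _].
have inA i : i \in A = in_range (g i * h)%g && walk_in_range s (g i * h)%g.
  by rewrite inE row_Mprod_neq0.
have translateA i : i \in A -> g (translate h i) = (g i * h)%g.
  by rewrite inA => /andP[/translateE].
have translate_inj : {in A &, injective (translate h)}.
  move=> i j /translateA gi /translateA gj eq_ij.
  by apply/g_inj/(mulIg h); rewrite -gi -gj eq_ij.
rewrite -(card_in_imset translate_inj); apply: eq_card => l.
apply/imsetP/idP => [[i iA ->] | lB].
  rewrite inE (translateA i iA) mulgK in_range_g andbT.
  by move: iA; rewrite inA => /andP[].
move: lB; rewrite inE => /andP[walk_l /existsP[i /eqP gi]].
have iA : i \in A by rewrite inA gi mulgVK in_range_g walk_l.
by exists i => //; apply: g_inj; rewrite translateA // gi mulgVK.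
Qed.

End ElementaryGrading.

Theorem mainTheorem2 (G : groupType) (F : fieldType) (n : nat)
  (g : 'I_n -> G) (h1 : G) (hs : seq G) :
  [pchar F]%R =i pred0 ->
  injective g ->
  all (in_supp g) (h1 :: hs) ->
  gprod (h1 :: hs) = 1%g ->
  nz_rows (Mprod F g (h1 :: hs)) = nz_rows (Mprod F g hs).
Proof.
move=> _ g_inj _ prod1.
have gprod_hs : gprod hs = (h1^-1)%g by apply: (mulgI h1); rewrite mulgV -prod1.
rewrite nz_rows_Mprod_cons // /nz_rows; apply: eq_card => l.
rewrite !inE row_Mprod_neq0 //; case walk_l: (walk_in_range _ _ _) => //=.
by rewrite -gprod_hs walk_in_range_end // in_range_g.
Qed.
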